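(* Let $\mathcal{D}$ be any distribution over probability distributions on $[s]$, $\epsilon,\delta>0$, and let $X_1,\dots,X_{T_0}$ be i.i.d. samples from $\mathcal{D}$ with $T_0=c_0\frac1\epsilon\log\frac1{\epsilon\delta}$ for a sufficiently large absolute constant $c_0$. Let $J_{\mathrm{large}}$ be the set of $j\in[s]$ such that $p_{X_i}(j)\ge\epsilon/2$ for some $i\le T_0$. Then $|J_{\mathrm{large}}|\le O\left(\frac{1}{\epsilon^2}\log\frac{1}{\epsilon\delta}\right)$, and with failure probability at most $\delta/100$, every $j$ with $p_{M(\mathcal{D})}(j)\ge\epsilon$ belongs to $J_{\mathrm{large}}$.
   Context: Each sample $X\sim\mathcal{D}$ is a distribution on $[s]=\{1,\dots,s\}$ with probabilities $p_X(1),\dots,p_X(s)$, and $p_{M(\mathcal{D})}(j)=\mathbb{E}_{X\sim\mathcal{D}}[p_X(j)]$. *)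

From HB Require Import structures.
From mathcomp Require Import all_boot all_order all_algebra.
From mathcomp Require Import all_classical all_reals all_analysis.
Set Implicit Arguments. Unset Strict Implicit. Unset Printing Implicit Defensive.
Import Order.TTheory GRing.Theory Num.Theory.
Local Open Scope classical_set_scope.
Local Open Scope ring_scope.

(* Mutual independence of a finite family of random elements
   X i : Omega -> S (i : 'I_n), each measurable for the sigma-algebra of S:
   for every choice of measurable sets A i, the events {X i \in A i}
   satisfy the product rule. (Taking A i = setT for some i gives the
   product rule for every subfamily, so this is the usual mutual
   independence of the sigma-algebras sigma(X i) = X i^-1(measurable).) *)
Definition mutually_independent {R : realType} {d d' : measure_display}
  {Omega : measurableType d} {S : measurableType d'}
  (P : probability Omega R) (n : nat) (X : 'I_n -> Omega -> S) : Prop :=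
  forall A : 'I_n -> set S, (forall i, measurable (A i)) ->
    P (\bigcap_i (X i @^-1` A i)) = \big[*%E/1%E]_(i < n) P (X i @^-1` A i).

Definition has_law {R : realType} {d d' : measure_display}
  {Omega : measurableType d} {S : measurableType d'}
  (P : probability Omega R) (D : probability S R) (Y : Omega -> S) : Prop :=
  forall A : set S, measurable A -> P (Y @^-1` A) = D A.

Definition is_distr {R : realType} (s : nat) (q : 'I_s -> R) : Prop :=
  (forall j, 0 <= q j) /\ \sum_(j < s) q j = 1.

Definition mixture {R : realType} {d' : measure_display} {S : measurableType d'}
  (D : probability S R) (s : nat) (p : S -> 'I_s -> R) (j : 'I_s) : \bar R :=
  (\int[D]_x (p x j)%:E)%E.

Definition J_large {R : realType} {S : Type} (s T0 : nat)
  (p : S -> 'I_s -> R) (Xs : 'I_T0 -> S) (eps : R) : {set 'I_s} :=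
  [set j | [exists i, eps / 2 <= p (Xs i) j]].

From HB Require Import structures.
From mathcomp Require Import all_boot all_order all_algebra.
From mathcomp Require Import all_classical all_reals all_analysis.
From mathcomp Require Import lra measurable_realfun.
Set Implicit Arguments.
Unset Strict Implicit.
Unset Printing Implicit Defensive.
Import Order.TTheory GRing.Theory Num.Theory.
Local Open Scope classical_set_scope.
Local Open Scope ring_scope.

(* Every sample distribution has mass 1, so the T0 samples carry total mass T0
   and at most 2 T0 / eps coordinates reach eps / 2 in one of them; for
   T0 ~ c0 L / eps with L = ln (1 / (eps delta)) this is O(L / eps^2).
   Conversely, if p_M(j) >= eps then, as p_X(j) <= 1, one sample has
   p_X(j) < eps / 2 with probability at most 1 - eps / 2, so all T0 independent
   samples miss j with probability at most
   (1 - eps / 2)^T0 <= exp (- eps T0 / 2) <= (eps delta)^8 once c0 >= 16.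
   At most 1 / eps coordinates are heavy, and the union bound leaves
   (eps delta)^8 / eps <= delta / 100. *)

Lemma is_distr_le1 (R : realType) s (q : 'I_s -> R) j : is_distr q -> 0 <= q j <= 1.
Proof.
case=> q_ge0 q_sum; rewrite q_ge0 -q_sum (bigD1 j) //= lerDl.
by apply: sumr_ge0 => k _.
Qed.

Lemma card_ge_mul_le_sume (R : realDomainType) (I : finType) (f : I -> \bar R) (e : R) :
  (forall i, 0 <= f i)%E -> ((#|[set i | (e%:E <= f i)%E]%SET|%:R * e)%:E <= \sum_i f i)%E.
Proof.
move=> f_ge0; rewrite (bigID (mem [set i | (e%:E <= f i)%E]%SET)) /=.
apply: le_trans (leeDl _ _); last exact: sume_ge0.
rewrite mulr_natl -sumr_const -sumEFin; apply: lee_sum => i.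
by rewrite inE.
Qed.

Lemma measure_bigsetU_le d (T : measurableType d) (R : realType)
    (mu : {measure set T -> \bar R}) (I : Type) (r : seq I) (P : pred I)
    (F : I -> set T) : (forall i, measurable (F i)) ->
  (mu (\big[setU/set0]_(i <- r | P i) F i) <= \sum_(i <- r | P i) mu (F i))%E.
Proof.
move=> mF; elim: r => [|i r IH]; first by rewrite !big_nil measure0.
rewrite !big_cons; case: (P i) => //.
apply: le_trans (measureU2 _ _ _) _ => //; first exact: bigsetU_measurable.
exact: leeD.
Qed.

Lemma lee_prod_cst (R : realDomainType) n (f : 'I_n -> \bar R) (c : R) : 0 <= c ->
  (forall i, 0 <= f i)%E -> (forall i, f i <= c%:E)%E ->
  (\prod_(i < n) f i <= (c ^+ n)%:E)%E.
Proof.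
move=> c_ge0; elim: n f => [|n IH] f f_ge0 f_le; first by rewrite big_ord0 expr0.
rewrite big_ord_recr /= exprSr EFinM; apply: lee_pmul => //.
  exact: prode_ge0.
exact: IH.
Qed.

Lemma probability_lt_le (R : realType) d (T : measurableType d)
    (P : probability T R) (f : T -> R) (a e : R) :
  measurable_fun setT f -> (forall x, 0 <= f x <= 1) -> 0 <= a ->
  (e%:E <= \int[P]_x (f x)%:E)%E -> (P [set x | (f x < a)%R] <= (1 + a - e)%:E)%E.
Proof.
move=> mf f01 a_ge0 e_le.
set A := [set x | f x < a].
have mA : measurable A.
  by have := mf measurableT _ (measurable_itv `]-oo, a[); rewrite setTI.
have mCA : measurable_fun setT (fun x => (\1_(~` A) x : R)%:E).
  by apply/measurable_EFinP; apply: measurable_indic; exact: measurableC.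
have int_le : (\int[P]_x (f x)%:E <= \int[P]_x (a%:E + (\1_(~` A) x : R)%:E))%E.
  apply: ge0_le_integral => //.
  - by move=> x _; rewrite lee_fin; case/andP: (f01 x).
  - exact/measurable_EFinP.
  - by apply: emeasurable_funD => //; exact: measurable_cst.
  - move=> x _; rewrite -EFinD lee_fin indicE in_setC.
    have [/set_mem fx_lt|_] /= := boolP (x \in A); first by rewrite addr0 ltW.
    by case/andP: (f01 x) => _; lra.
rewrite ge0_integralD // integral_cst // in int_le.
rewrite [X in (_ <= a%:E * X + _)%E]probability_setT mule1 in int_le.
rewrite integral_indic ?setIT // in int_le; last exact: measurableC.
rewrite [X in (_ <= _ + X)%E]probability_setC // in int_le.
have := le_trans e_le int_le.
have : (P A <= 1)%E by exact: probability_le1.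
have : (0 <= P A)%E by [].
by case: (P A) => [r| |] //=; rewrite !lee_fin => r_ge0 r_le1; lra.
Qed.

Lemma expr_onem_le_expR (R : realType) (x : R) n : x <= 1 ->
  (1 - x) ^+ n <= expR (- x * n%:R).
Proof.
move=> x_le1; rewrite expRM_natr; apply: lerXn2r; rewrite ?nnegrE ?subr_ge0 //.
exact: expR_ge1Dx.
Qed.

Lemma expRN_ln_inv (R : realType) (x : R) : 0 < x -> expR (- ln (1 / x)) = x.
Proof. by move=> x_gt0; rewrite div1r lnV ?posrE // opprK lnK. Qed.

Lemma half_le_of_expRN_le (R : realType) (x : R) : expR (- x) <= 1 / 2 -> 1 / 2 <= x.
Proof. by move=> expRN_le; have := le_trans (expR_ge1Dx (- x)) expRN_le; lra. Qed.

Lemma notin_J_large (R : realType) (S : Type) s T0 (p : S -> 'I_s -> R)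
    (Xs : 'I_T0 -> S) (eps : R) (j : 'I_s) :
  (j \notin J_large p Xs eps) = [forall i, p (Xs i) j < eps / 2].
Proof.
by rewrite inE negb_exists; apply: eq_forallb => i; rewrite -ltNge.
Qed.

Lemma card_J_large_le (R : realType) (S : Type) s T0 (p : S -> 'I_s -> R)
    (Xs : 'I_T0 -> S) (eps : R) :
  (forall x, is_distr (p x)) -> #|J_large p Xs eps|%:R * (eps / 2) <= T0%:R.
Proof.
move=> pd; set J := J_large p Xs eps.
have p_ge0 i j : 0 <= p (Xs i) j by case/andP: (is_distr_le1 j (pd (Xs i))).
have sum_ge0 j : 0 <= \sum_i p (Xs i) j by exact: sumr_ge0.
rewrite mulr_natl -sumr_const.
apply: (@le_trans _ _ (\sum_(j in J) \sum_i p (Xs i) j)).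
  apply: ler_sum => j; rewrite inE => /existsP [i le_pij].
  by rewrite (bigD1 i) //= (le_trans le_pij) // lerDl sumr_ge0.
apply: (@le_trans _ _ (\sum_j \sum_i p (Xs i) j)).
  by rewrite [leRHS](bigID (mem J)) /= lerDl sumr_ge0.
rewrite exchange_big /= (eq_bigr (fun=> 1)); last by move=> i _; case: (pd (Xs i)).
by rewrite sumr_const card_ord.
Qed.

Section Mixture.
Variables (R : realType) (d' : measure_display) (S : measurableType d').
Variables (D : probability S R) (s : nat) (p : S -> 'I_s -> R).
Hypothesis mp : forall j, measurable_fun setT (fun x => p x j).
Hypothesis pd : forall x, is_distr (p x).

Let p_ge0 x j : 0 <= p x j.
Proof. by case/andP: (is_distr_le1 j (pd x)). Qed.

Lemma mixture_ge0 j : (0 <= mixture D p j)%E.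
Proof. by apply: integral_ge0 => x _; rewrite lee_fin. Qed.

Lemma sum_mixture : (\sum_j mixture D p j = 1)%E.
Proof.
rewrite /mixture -ge0_integral_sum //; last first.
- by move=> j x _; rewrite lee_fin.
- by move=> j; apply/measurable_EFinP; exact: mp.
have -> : (fun x => \sum_j (p x j)%:E) = fun=> 1%E.
  by apply/funext => x; rewrite sumEFin; case: (pd x) => _ ->.
by rewrite integral_cst // mul1e; exact: probability_setT.
Qed.

Lemma card_heavy_mixture_le (eps : R) :
  #|[set j | (eps%:E <= mixture D p j)%E]%SET|%:R * eps <= 1.
Proof.
by rewrite -lee_fin -sum_mixture; apply: card_ge_mul_le_sume; exact: mixture_ge0.
Qed.

Lemma probability_small_le (eps : R) j : 0 <= eps ->
  (eps%:E <= mixture D p j)%E ->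
  (D [set x | (p x j < eps / 2)%R] <= (1 - eps / 2)%:E)%E.
Proof.
move=> eps_ge0 heavy_j.
have -> : 1 - eps / 2 = 1 + eps / 2 - eps by lra.
apply: probability_lt_le => //.
- by move=> x; exact: is_distr_le1.
- by rewrite divr_ge0.
Qed.

Section Sampling.
Variables (d : measure_display) (Omega : measurableType d) (P : probability Omega R).
Variables (T0 : nat) (X : 'I_T0 -> Omega -> S).
Hypothesis mX : forall i, measurable_fun setT (X i).
Hypothesis lawX : forall i, has_law P D (X i).
Hypothesis indX : mutually_independent P X.

Lemma measurable_all_in (A : set S) : measurable A ->
  measurable (\bigcap_i X i @^-1` A).
Proof.
move=> mA; apply: fin_bigcap_measurable; first exact: finite_finset.
by move=> i _; have := mX i measurableT mA; rewrite setTI.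
Qed.

Lemma iid_all_in_le (A : set S) (c : R) : measurable A -> (D A <= c%:E)%E ->
  (P (\bigcap_i X i @^-1` A) <= (c ^+ T0)%:E)%E.
Proof.
move=> mA DA_le; have c_ge0 : 0 <= c by rewrite -lee_fin (le_trans _ DA_le).
by rewrite (@indX (fun=> A)) //; apply: lee_prod_cst => // i; rewrite lawX.
Qed.

Lemma probability_heavy_missed_le (eps : R) : 0 < eps -> eps <= 1 ->
  (P [set w | exists j, (eps%:E <= mixture D p j)%E /\
                j \notin J_large p (fun i => X i w) eps]
   <= ((1 - eps / 2) ^+ T0 / eps)%:E)%E.
Proof.
move=> eps_gt0 eps_le1.
pose small j := [set x | (p x j < eps / 2)%R].
have small_meas j : measurable (small j).
  by have := mp j measurableT (measurable_itv `]-oo, (eps / 2)%R[); rewrite setTI.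
have -> : [set w | exists j, (eps%:E <= mixture D p j)%E /\
                     j \notin J_large p (fun i => X i w) eps] =
          \big[setU/set0]_(j | (eps%:E <= mixture D p j)%E)
             \bigcap_i X i @^-1` small j.
  rewrite -bigcup_seq_cond; apply/seteqP; split => w /=.
    move=> [j [heavy_j]]; rewrite notin_J_large => /forallP small_j.
    exists j => [|i _]; last exact: small_j.
    by apply/andP; split; [exact: mem_index_enum|].
  move=> [j /= /andP [_ heavy_j] small_j]; exists j; split => //.
  by rewrite notin_J_large; apply/forallP => i; exact: small_j.
apply: le_trans (measure_bigsetU_le _ _ _ _) _.
  by move=> j; exact: measurable_all_in.
apply: (@le_trans _ _ (\sum_(j | (eps%:E <= mixture D p j)%E) ((1 - eps / 2) ^+ T0)%:E)%E).
  apply: lee_sum => j heavy_j; apply: iid_all_in_le => //.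
  exact: probability_small_le (ltW eps_gt0) heavy_j.
set q := (1 - eps / 2) ^+ T0.
have q_ge0 : 0 <= q by apply: exprn_ge0; lra.
rewrite sumEFin sumr_const lee_fin -[q *+ _]mulr_natl.
rewrite (eq_card (B := [set j | (eps%:E <= mixture D p j)%E]%SET)) => [|j]; last by rewrite inE.
by rewrite ler_pdivlMr // mulrAC ler_piMl // card_heavy_mixture_le.
Qed.

End Sampling.

End Mixture.

Lemma sample_size_card_le (R : realType) (c0 eps delta L K : R) (T : nat) :
  0 <= c0 -> 0 < eps -> eps <= 1 / 2 -> delta < 1 -> expR (- L) = eps * delta ->
  K * (eps / 2) <= T%:R -> T%:R < c0 / eps * L + 1 ->
  K <= (2 * c0 + 4) / eps ^+ 2 * L.
Proof.
move=> c0_ge0 eps_gt0 eps_le delta_lt1 expRNL K_le T_lt.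
have L_ge : 1 / 2 <= L.
  by apply: half_le_of_expRN_le; rewrite expRNL (le_trans _ eps_le) // ler_piMr ?ltW.
have c0L : eps * (c0 / eps * L) = c0 * L by rewrite mulrA mulrCA divff ?mulr1 ?gt_eqF.
have K_le' : eps * (K * (eps / 2)) <= eps * T%:R by rewrite ler_pM2l.
have T_lt' : eps * T%:R <= eps * (c0 / eps * L + 1) by rewrite ler_pM2l // ltW.
rewrite mulrAC ler_pdivlMr ?exprn_gt0 // expr2; lra.
Qed.

Lemma sample_size_tail_le (R : realType) (c0 eps delta L : R) (T : nat) :
  16 <= c0 -> 0 < eps -> eps <= 1 / 2 -> 0 < delta -> delta < 1 ->
  expR (- L) = eps * delta -> c0 / eps * L <= T%:R ->
  (1 - eps / 2) ^+ T / eps <= delta / 100.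
Proof.
move=> c0_ge eps_gt0 eps_le delta_gt0 delta_lt1 expRNL T_ge.
have L_ge : 1 / 2 <= L.
  by apply: half_le_of_expRN_le; rewrite expRNL (le_trans _ eps_le) // ler_piMr ?ltW.
have c0L : eps * (c0 / eps * L) = c0 * L by rewrite mulrA mulrCA divff ?mulr1 ?gt_eqF.
have epsT_ge : c0 * L <= eps * T%:R by rewrite -c0L ler_pM2l.
have c0L_ge : 16 * L <= c0 * L by rewrite ler_pM2r //; lra.
have tail_le : (1 - eps / 2) ^+ T <= (eps * delta) ^+ 8.
  apply: le_trans (expr_onem_le_expR _ _) _; first lra.
  by rewrite -expRNL -expRM_natr ler_expR; lra.
have delta8_le : delta ^+ 8 <= delta.
  by rewrite exprSr ler_piMl ?exprn_ile1 ?ltW.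
have eps7_le : eps ^+ 7 <= 1 / 128.
  apply: le_trans (_ : (1 / 2) ^+ 7 <= _); first by rewrite lerXn2r ?nnegrE // ltW.
  by rewrite !exprS expr0; lra.
rewrite ler_pdivrMr //; apply: le_trans tail_le _.
rewrite exprMn exprS -mulrA [_ * eps]mulrC ler_pM2l //.
have tail8_le : eps ^+ 7 * delta ^+ 8 <= 1 / 128 * delta.
  by apply: ler_pM => //; apply: exprn_ge0; exact: ltW.
lra.
Qed.

Theorem lemma3p8 (R : realType) :
  exists c1 : R, 0 < c1 /\
  forall c0 : R, c1 <= c0 ->
  exists C : R, 0 < C /\
  forall (s : nat) (d d' : measure_display)
    (Omega : measurableType d) (P : probability Omega R)
    (S : measurableType d') (D : probability S R) (p : S -> 'I_s -> R),
    (forall j, measurable_fun setT (fun x => p x j)) ->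
    (forall x, is_distr (p x)) ->
  forall (eps delta : R), 0 < eps -> eps <= 1 / 2 -> 0 < delta -> delta < 1 ->
  forall (T0 : nat),
    c0 / eps * ln (1 / (eps * delta)) <= T0%:R ->
    T0%:R < c0 / eps * ln (1 / (eps * delta)) + 1 ->
  forall X : 'I_T0 -> Omega -> S,
    (forall i, measurable_fun setT (X i)) ->
    (forall i, has_law P D (X i)) ->
    mutually_independent P X ->
    (forall w : Omega,
       (#|J_large p (fun i => X i w) eps|%:R <= C / eps ^+ 2 * ln (1 / (eps * delta))))
    /\
    (P [set w | exists j : 'I_s, (eps%:E <= mixture D p j)%E /\
                  j \notin J_large p (fun i => X i w) eps] <= (delta / 100)%:E)%E.
Proof.
exists 16; split => [|c0 c0_ge]; first lra.
exists (2 * c0 + 4); split; first lra.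
move=> s d d' Omega P S D p mp pd eps delta eps_gt0 eps_le delta_gt0 delta_lt1
  T0 T0_ge T0_lt X mX lawX indX.
have expRNL := expRN_ln_inv (mulr_gt0 eps_gt0 delta_gt0).
split => [w|].
- apply: (sample_size_card_le _ eps_gt0 eps_le delta_lt1 expRNL _ T0_lt); first lra.
  exact: card_J_large_le.
- apply: le_trans (probability_heavy_missed_le mp pd mX lawX indX eps_gt0 _) _.
    lra.
  rewrite lee_fin; exact: (sample_size_tail_le c0_ge eps_gt0 eps_le delta_gt0 delta_lt1 expRNL).
Qed.
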